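(* Let $X,Y$ be Hilbert spaces, $F:\mathrm{dom}(F)\subset X\to Y$, $y\in\mathrm{Ran}(F)$, $x^*\in\mathrm{dom}(F)$, and let $x^\dagger$ be an $x^*$-minimum-norm solution of $F(x)=y$. Suppose Assumption 1 holds. Let $A:=F'(x^\dagger)$, and suppose there is a sequence of positive numbers $\lambda_k\in\sigma(AA^* )$ with $\lambda_k\to0$. Suppose there is a constant $\tau>0$ such that for every sufficiently small $\delta>0$ and every $y^\delta\in Y$ with $\|y^\delta-y\|\le\delta$ a number $\alpha(\delta,y^\delta)>0$ and a Tikhonov minimizer $x^\delta_{\alpha(\delta,y^\delta)}$ are chosen with $\|F(x^\delta_{\alpha(\delta,y^\delta)})-y^\delta\|\le\tau\delta$. If $$\sup\left\{\|x^\delta_{\alpha(\delta,y^\delta)}-x^\dagger\|:\ \|y^\delta-y\|\le\delta\right\}=o(\delta^{1/2})\quad\text{as }\delta\to0,$$ then $x^\dagger=x^*$.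
   Context: An $x^*$-minimum-norm solution is a point $x^\dagger\in\mathrm{dom}(F)$ with $F(x^\dagger)=y$ and $\|x^\dagger-x^*\|=\min\{\|x-x^*\|: x\in\mathrm{dom}(F),\ F(x)=y\}$. For $\alpha>0$ and $y^\delta\in Y$, a Tikhonov minimizer $x_\alpha^\delta$ is any minimizer over $\mathrm{dom}(F)$ of $\|F(x)-y^\delta\|^2+\alpha\|x-x^*\|^2$ (assumed to exist). $B_\rho(x^\dagger)=\{x\in X:\|x-x^\dagger\|<\rho\}$. $\sigma(AA^* )$ denotes the spectrum of $AA^*$. Assumption 1: there is $\rho>0$ with $B_\rho(x^\dagger)\subset\mathrm{dom}(F)$, $F$ is Fréchet differentiable on $B_\rho(x^\dagger)$, and there is $\kappa_0\ge0$ such that for all $x,z\in B_\rho(x^\dagger)$ there is a bounded linear operator $R(x,z):X\to X$ with $F'(x)=F'(z)R(x,z)$ and $\|I-R(x,z)\|\le\kappa_0\|x-z\|$. *)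

From HB Require Import structures.
From mathcomp Require Import all_boot all_order all_algebra.
From mathcomp Require Import all_classical all_reals all_analysis.
Set Implicit Arguments. Unset Strict Implicit. Unset Printing Implicit Defensive.
Import Order.TTheory GRing.Theory Num.Theory.
Import numFieldNormedType.Exports.
Local Open Scope classical_set_scope.
Local Open Scope ring_scope.

(* [ip] is an inner product on the (complete) normed space X inducing its norm;
   a complete normed space with such an inner product is a real Hilbert space. *)
Definition is_inner_product {R : realType} (X : normedModType R)
  (ip : X -> X -> R) : Prop :=
  (forall x z, ip x z = ip z x) /\
  (forall (a : R) (x x' z : X), ip (a *: x + x') z = a * ip x z + ip x' z) /\
  (forall x, ip x x = `|x| ^+ 2).

Definition is_adjoint {R : realType} (X Y : normedModType R)
  (ipX : X -> X -> R) (ipY : Y -> Y -> R) (A : X -> Y) (Astar : Y -> X) : Prop :=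
  forall x y, ipY (A x) y = ipX x (Astar y).

Definition spectrum {R : realType} (Y : normedModType R) (T : Y -> Y) : set R :=
  [set l | ~ exists S : Y -> Y, continuous S /\
      (forall v, S (T v - l *: v) = v) /\ (forall v, T (S v) - l *: S v = v)].

Definition min_norm_solution {R : realType} (X Y : normedModType R)
  (D : set X) (F : X -> Y) (y : Y) (xstar xdag : X) : Prop :=
  D xdag /\ F xdag = y /\
  forall x, D x -> F x = y -> `|xdag - xstar| <= `|x - xstar|.

Definition assumption1 {R : realType} (X Y : normedModType R)
  (D : set X) (F : X -> Y) (xdag : X) : Prop :=
  exists rho : R, 0 < rho /\ ball xdag rho `<=` D /\
   (forall x, ball xdag rho x -> differentiable F x) /\
   exists kappa0 : R, 0 <= kappa0 /\
   forall x z, ball xdag rho x -> ball xdag rho z ->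
     exists Rxz : {linear X -> X}, continuous Rxz /\
       (forall h, 'd F x h = 'd F z (Rxz h)) /\
       (forall h, `|h - Rxz h| <= kappa0 * `|x - z| * `|h|).

Definition tikhonov_minimizer {R : realType} (X Y : normedModType R)
  (D : set X) (F : X -> Y) (xstar : X) (alpha : R) (ydelta : Y) (x : X) : Prop :=
  D x /\ forall z, D z ->
    `|F x - ydelta| ^+ 2 + alpha * `|x - xstar| ^+ 2 <=
    `|F z - ydelta| ^+ 2 + alpha * `|z - xstar| ^+ 2.

From HB Require Import structures.
From mathcomp Require Import all_boot all_order all_algebra.
From mathcomp Require Import all_classical all_reals all_analysis.
From mathcomp Require Import ring lra.
Import Order.TTheory GRing.Theory Num.Theory.
Import numFieldNormedType.Exports.
Local Open Scope classical_set_scope.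
Local Open Scope ring_scope.
Set Implicit Arguments. Unset Strict Implicit.

(* Suppose x^dagger <> x^*.  For a small spectral value l of A A^* take an
   approximate unit eigenvector u and the data y + l u, so that delta = l.
   Testing the first-order condition of the Tikhonov functional at the
   regularized solution x with x^* - x gives alpha = O(l); testing it with
   A^* u and linearizing F around x^dagger by Assumption 1 gives
     (l + alpha) <x - x^dagger, A^* u> >= (3/4 - o(1)) l^2,
   where the sign of u is chosen so that alpha <x^* - x^dagger, A^* u> >= 0.
   Since |A^* u| <= 2 sqrt l, the left side is O(l^2 |x - x^dagger| / sqrt l),
   which contradicts |x - x^dagger| = o(sqrt delta).  Approximate eigenvectors
   exist because a bounded self-adjoint operator that is bounded below is
   invertible: its square is coercive, hence onto by a contraction argument. *)

Lemma lipschitz_continuous (R : realType) (V W : normedModType R) (f : V -> W) (k : R) :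
  (forall a b, `|f a - f b| <= k * `|a - b|) -> continuous f.
Proof.
move=> fk x; apply/(@cvgrPdist_lt _ _ _ (nbhs x)) => e e0.
have k1 : 0 < `|k| + 1 by rewrite ltr_pwDr.
near=> z; apply: (le_lt_trans (fk x z)).
apply: (le_lt_trans (y := (`|k| + 1) * `|x - z|)).
  by rewrite ler_wpM2r // (le_trans (ler_norm _)) // lerDl.
rewrite -ltr_pdivlMl //; near: z; apply: cvgr_dist_lt => //.
by rewrite mulr_gt0 ?invr_gt0.
Unshelve. all: by end_near.
Qed.

Lemma contraction_fixed_point (R : realType) (X : completeNormedModType R)
    (g : X -> X) (q : R) :
  0 <= q < 1 -> (forall a b, `|g a - g b| <= q * `|a - b|) -> exists p, g p = p.
Proof.
move=> /andP[q0 q1] gq.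
have ctr : is_contraction (totalfun_ setT g : {fun [set: X] >-> [set: X]}).
  by exists (NngNum q0); split => // -[a b] _; exact: gq.
have [|p _ hp] := banach_fixed_point ctr closedT; first by exists 0.
by exists p; rewrite {2}hp.
Qed.

Section InnerProduct.
Variables (R : realType) (X : normedModType R) (ip : X -> X -> R).
Hypothesis hip : is_inner_product ip.

Lemma ipC x z : ip x z = ip z x.
Proof. by case: hip. Qed.

Lemma ipDl x x' z : ip (x + x') z = ip x z + ip x' z.
Proof. by case: hip => _ [hl _]; have := hl 1 x x' z; rewrite scale1r mul1r. Qed.

Lemma ip0l z : ip 0 z = 0.
Proof. by apply: (addrI (ip 0 z)); rewrite -ipDl !addr0. Qed.

Lemma ipZl a x z : ip (a *: x) z = a * ip x z.
Proof. by case: hip => _ [hl _]; have := hl a x 0 z; rewrite !addr0 ip0l addr0. Qed.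

Lemma ipNl x z : ip (- x) z = - ip x z.
Proof. by rewrite -scaleN1r ipZl mulN1r. Qed.

Lemma ipBl x x' z : ip (x - x') z = ip x z - ip x' z.
Proof. by rewrite ipDl ipNl. Qed.

Lemma ipDr x z z' : ip x (z + z') = ip x z + ip x z'.
Proof. by rewrite !(ipC x) ipDl. Qed.

Lemma ipZr a x z : ip x (a *: z) = a * ip x z.
Proof. by rewrite !(ipC x) ipZl. Qed.

Lemma ipNr x z : ip x (- z) = - ip x z.
Proof. by rewrite !(ipC x) ipNl. Qed.

Lemma ipBr x z z' : ip x (z - z') = ip x z - ip x z'.
Proof. by rewrite ipDr ipNr. Qed.

Lemma ip0r x : ip x 0 = 0.
Proof. by rewrite ipC ip0l. Qed.

Lemma ip_normr2 x : ip x x = `|x| ^+ 2.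
Proof. by case: hip => _ []. Qed.

Lemma normrD_sqr a b : `|a + b| ^+ 2 = `|a| ^+ 2 + 2 * ip a b + `|b| ^+ 2.
Proof. by rewrite -!ip_normr2 ipDl !ipDr (ipC b a); ring. Qed.

Lemma normrB_sqr a b : `|a - b| ^+ 2 = `|a| ^+ 2 - 2 * ip a b + `|b| ^+ 2.
Proof. by rewrite normrD_sqr ipNr normrN; ring. Qed.

Lemma cauchy_schwarz a b : `|ip a b| <= `|a| * `|b|.
Proof.
have [->|b0] := eqVneq b 0; first by rewrite ip0r !normr0 mulr0.
set P := ip a b; set N := `|b| ^+ 2.
have N0 : 0 < N by rewrite exprn_gt0 // normr_gt0.
have : 0 <= `|a| ^+ 2 - P ^+ 2 / N.
  have -> : `|a| ^+ 2 - P ^+ 2 / N = `|a - (P / N) *: b| ^+ 2.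
    rewrite normrB_sqr ipZr normrZ exprMn real_normK ?num_real // -/P -/N.
    by field; rewrite gt_eqF.
  exact: exprn_ge0.
rewrite subr_ge0 ler_pdivrMr // => hP.
by rewrite -(@ler_pXn2r _ 2) ?nnegrE ?mulr_ge0 // real_normK ?num_real // exprMn.
Qed.

Lemma ip_continuousl u : continuous (ip ^~ u).
Proof.
apply: (@lipschitz_continuous _ _ _ _ `|u|) => a b.
by rewrite -ipBl (le_trans (cauchy_schwarz _ _)) // mulrC.
Qed.

Lemma ip_cvgl {T : Type} {F : set_system T} {FF : Filter F} {f : T -> X} {a : X} (u : X) :
  f @ F --> a -> ip (f t) u @[t --> F] --> ip a u.
Proof. exact: (@continuous_cvg _ _ _ F FF f (ip ^~ u) a (@ip_continuousl u a)). Qed.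

Lemma ip_nondegenerate z : (forall w, ip w z = 0) -> z = 0.
Proof. by move/(_ z)/eqP; rewrite ip_normr2 sqrf_eq0 normr_eq0 => /eqP. Qed.

End InnerProduct.

(** * Bounded self-adjoint operators *)

Section CoerciveOperator.
Variables (R : realType) (Y : completeNormedModType R) (ip : Y -> Y -> R).
Hypothesis hip : is_inner_product ip.
Variables (C : {linear Y -> Y}) (c L : R).
Hypotheses (c0 : 0 < c) (cL : c <= L).
Hypothesis C_bounded : forall v, `|C v| <= L * `|v|.
Hypothesis C_coercive : forall z, c * `|z| ^+ 2 <= ip z (C z).

(* The Lax-Milgram step: with t = c / L^2, z |-> z - t (C z - v) is a
   contraction, and its fixed point solves C z = v. *)
Lemma coercive_contraction z :
  `|z - (c / L ^+ 2) *: C z| <= (1 - (c / L) ^+ 2 / 2) * `|z|.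
Proof.
have L0 : 0 < L := lt_le_trans c0 cL.
set t := c / L ^+ 2; set s := (c / L) ^+ 2.
have t0 : 0 <= t by rewrite divr_ge0 ?exprn_ge0 ?ltW.
have s0 : 0 <= s by rewrite exprn_ge0 ?divr_ge0 ?ltW.
have s1 : s <= 1.
  by rewrite exprn_ile1 // ?divr_ge0 ?(ltW c0) ?(ltW L0) // ler_pdivrMr // mul1r.
rewrite -(@ler_pXn2r _ 2) ?nnegrE ?mulr_ge0 //; last by lra.
rewrite (normrB_sqr hip) (ipZr hip) normrZ ger0_norm // exprMn.
have h1 : t * (c * `|z| ^+ 2) <= t * ip z (C z) := ler_wpM2l t0 (C_coercive z).
have h2 : t ^+ 2 * `|C z| ^+ 2 <= t ^+ 2 * (L * `|z|) ^+ 2.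
  rewrite ler_wpM2l ?exprn_ge0 // ler_pXn2r ?nnegrE //.
  by rewrite mulr_ge0 // ltW.
have e1 : t * (c * `|z| ^+ 2) = s * `|z| ^+ 2.
  by rewrite /t /s; field; rewrite gt_eqF.
have e2 : t ^+ 2 * (L * `|z|) ^+ 2 = s * `|z| ^+ 2.
  by rewrite /t /s; field; rewrite gt_eqF.
have e3 : ((1 - s / 2) * `|z|) ^+ 2 = `|z| ^+ 2 - s * `|z| ^+ 2 + (s / 2) ^+ 2 * `|z| ^+ 2.
  by field.
have h3 : 0 <= (s / 2) ^+ 2 * `|z| ^+ 2 by rewrite mulr_ge0 ?sqr_ge0.
by rewrite e3; lra.
Qed.

Lemma coercive_surjective v : exists w, C w = v.
Proof.
have L0 : 0 < L := lt_le_trans c0 cL.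
set t := c / L ^+ 2; set q := 1 - (c / L) ^+ 2 / 2.
have t0 : 0 < t by rewrite divr_gt0 ?exprn_gt0.
have q01 : 0 <= q < 1.
  have : 0 < (c / L) ^+ 2 <= 1.
    rewrite exprn_gt0 ?divr_gt0 // exprn_ile1 // ?divr_ge0 ?(ltW c0) ?(ltW L0) //.
    by rewrite ler_pdivrMr // mul1r.
  by rewrite /q; move=> /andP[? ?]; apply/andP; split; lra.
pose phi w := w - t *: C w + t *: v.
have phi_lip a b : `|phi a - phi b| <= q * `|a - b|.
  have -> : phi a - phi b = (a - b) - t *: C (a - b).
    rewrite /phi [b - _ + _]addrC addrKA [C (a - b)]linearB scalerBr.
    rewrite !opprB !addrA.
    by rewrite [LHS]addrAC [a - _ - b]addrAC [RHS]addrAC.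
  exact: coercive_contraction.
have [w hw] := contraction_fixed_point q01 phi_lip.
exists w; apply: (scalerI (lt0r_neq0 t0)); move: hw.
rewrite /phi -addrA => /(canRL (addKr w)); rewrite addNr addrC => /eqP.
by rewrite subr_eq0 => /eqP ->.
Qed.

End CoerciveOperator.

Section BoundedBelowOperator.
Variables (R : realType) (Y : completeNormedModType R) (ip : Y -> Y -> R).
Hypothesis hip : is_inner_product ip.
Variables (B : Y -> Y) (K eta : R).
Hypothesis B_linear : linear B.
HB.instance Definition _ := GRing.isLinear.Build R Y Y *:%R B B_linear.
Hypotheses (B_sym : forall u v, ip (B u) v = ip u (B v))
  (B_bounded : forall v, `|B v| <= K * `|v|) (eta0 : 0 < eta)
  (B_bounded_below : forall v, eta * `|v| <= `|B v|).

Lemma bounded_below_surjective v : exists w, B w = v.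
Proof.
set K' := `|K| + eta.
have K'_bounded u : `|B u| <= K' * `|u|.
  by rewrite (le_trans (B_bounded u)) // ler_wpM2r // (le_trans (ler_norm K)) // lerDl ltW.
have BB_bounded u : `|(B \o B) u| <= K' ^+ 2 * `|u|.
  rewrite expr2 -mulrA (le_trans (K'_bounded _)) // ler_wpM2l ?K'_bounded //.
  by rewrite addr_ge0 // ltW.
have BB_coercive z : eta ^+ 2 * `|z| ^+ 2 <= ip z ((B \o B) z).
  by rewrite /= -B_sym (ip_normr2 hip) -exprMn ler_pXn2r ?nnegrE ?mulr_ge0 ?(ltW eta0).
have eta_le : eta ^+ 2 <= K' ^+ 2.
  have K'0 : 0 <= K' by rewrite addr_ge0 // ltW.
  by rewrite ler_pXn2r ?nnegrE ?(ltW eta0) // lerDr.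
have [w <-] := coercive_surjective hip (exprn_gt0 2 eta0) eta_le BB_bounded BB_coercive v.
by exists (B w).
Qed.

Lemma bounded_below_invertible :
  exists S : Y -> Y, continuous S /\ (forall v, S (B v) = v) /\ (forall v, B (S v) = v).
Proof.
have [S BS] := choice bounded_below_surjective.
have S_lipschitz a b : `|S a - S b| <= eta^-1 * `|a - b|.
  by rewrite ler_pdivlMl //; have := B_bounded_below (S a - S b); rewrite linearB /= !BS.
exists S; split; first exact: lipschitz_continuous S_lipschitz.
split => // v; have := B_bounded_below (S (B v) - v).
by rewrite linearB /= BS subrr normr0 pmulr_rle0 // normr_le0 subr_eq0 => /eqP.
Qed.

End BoundedBelowOperator.

Lemma spectrum_approx_eigenvector (R : realType) (Y : completeNormedModType R)
    (ip : Y -> Y -> R) (T : {linear Y -> Y}) (K l eta : R) :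
  is_inner_product ip -> (forall u v, ip (T u) v = ip u (T v)) ->
  (forall v, `|T v| <= K * `|v|) -> spectrum T l -> 0 < eta ->
  exists u, `|u| = 1 /\ `|T u - l *: u| < eta.
Proof.
move=> hip T_sym T_bounded Tl eta0; apply: contrapT => no_eigvec; apply: Tl.
pose B v := T v - l *: v.
have B_linear : linear B.
  move=> a u v; rewrite /B linearP scalerDr scalerA mulrC -scalerA !scalerBr.
  by rewrite opprD addrACA.
have B_sym u v : ip (B u) v = ip u (B v).
  by rewrite /B (ipBl hip) (ipZl hip) (ipBr hip) (ipZr hip) T_sym.
have B_bounded v : `|B v| <= (K + `|l|) * `|v|.
  by rewrite mulrDl (le_trans (ler_normB _ _)) // lerD ?T_bounded // normrZ.
have B_bounded_below v : eta * `|v| <= `|B v|.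
  have [->|v0] := eqVneq v 0; first by rewrite normr0 mulr0.
  have nv : 0 < `|v| by rewrite normr_gt0.
  pose u := `|v|^-1 *: v.
  have nu : `|u| = 1 by rewrite normrZ normrV ?unitfE ?gt_eqF // normr_id mulVf ?gt_eqF.
  have : ~ (`|B u| < eta) by move=> h; apply: no_eigvec; exists u.
  move/negP; rewrite -leNgt /B /u linearZ scalerA mulrC -scalerA -scalerBr normrZ.
  rewrite normrV ?unitfE ?gt_eqF // normr_id.
  by rewrite ler_pdivlMl // mulrC.
have [S [S_cont [SB BS]]] :=
  bounded_below_invertible hip B_linear B_sym B_bounded eta0 B_bounded_below.
by exists S.
Qed.

(** * Stationarity and linearization *)

Lemma diff_dir_cvg (R : realType) (X Y : normedModType R) (F : X -> Y) (x h : X) :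
  differentiable F x -> t^-1 *: (F (t *: h + x) - F x) @[t --> 0^'] --> 'd F x h.
Proof. by move=> dF; rewrite -deriveE //; exact: diff_derivable. Qed.

Section TikhonovStationarity.
Variables (R : realType) (X Y : normedModType R).
Variables (ipX : X -> X -> R) (ipY : Y -> Y -> R).
Hypotheses (hX : is_inner_product ipX) (hY : is_inner_product ipY).
Variables (D : set X) (F : X -> Y) (xs : X) (alpha : R) (yd : Y) (x : X).
Hypothesis xmin : tikhonov_minimizer D F xs alpha yd x.

Lemma tikhonov_quotient_ge0 h t (Q : Y) : 0 < t -> D (t *: h + x) ->
  t *: Q = F (t *: h + x) - F x ->
  0 <= 2 * ipY Q (F x - yd) + t * (`|Q| ^+ 2 + alpha * `|h| ^+ 2)
       + 2 * (alpha * ipX (x - xs) h).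
Proof.
move=> t0 Dz hQ; have := xmin.2 _ Dz.
have -> : F (t *: h + x) - yd = (F x - yd) + t *: Q.
  by rewrite hQ [RHS]addrC subrKA.
have -> : t *: h + x - xs = (x - xs) + t *: h by rewrite -addrA addrC.
rewrite (normrD_sqr hY (F x - yd)) (normrD_sqr hX (x - xs)) (ipZr hY) (ipZr hX).
rewrite !normrZ gtr0_norm // (ipC hY); nra.
Qed.

Lemma tikhonov_stationary : nbhs x D -> differentiable F x ->
  forall h, ipY (F x - yd) ('d F x h) + alpha * ipX (x - xs) h = 0.
Proof.
move=> Dx dF.
suff dir_ge0 h : 0 <= ipY (F x - yd) ('d F x h) + alpha * ipX (x - xs) h.
  move=> h; apply/eqP; rewrite eq_le dir_ge0 andbT.
  by have := dir_ge0 (- h); rewrite linearN (ipNr hY) (ipNr hX) mulrN -opprD oppr_ge0.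
pose Q t := t^-1 *: (F (t *: h + x) - F x).
have Q_cvg : Q t @[t --> 0^'+] --> 'd F x h := cvg_dnbhs_at_right (diff_dir_cvg dF).
have t_cvg : t @[t --> (0 : R)^'+] --> 0 := cvg_at_right_filter cvg_id.
rewrite -(pmulr_rge0 _ (ltr0Sn R 1)) mulrDr (ipC hY).
apply: (@cvgr_to_ge _ (0 : R)^'+ _ _ (fun t => 2 * ipY (Q t) (F x - yd)
  + t * (`|Q t| ^+ 2 + alpha * `|h| ^+ 2) + 2 * (alpha * ipX (x - xs) h))).
- rewrite -[X in _ --> X + _]addr0.
  rewrite -[X in _ --> _ + X + _](mul0r (`|'d F x h| ^+ 2 + alpha * `|h| ^+ 2)).
  apply: cvgD; last exact: cvg_cst.
  apply: cvgD; first apply: cvgM; first exact: cvg_cst.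
    by apply: (ip_cvgl hY); exact: Q_cvg.
  apply: cvgM => //; apply: cvgD; last exact: cvg_cst.
  by rewrite expr2; apply: cvgM; exact: cvg_norm.
- have z_cvg : t *: h + x @[t --> (0 : R)^'+] --> x.
    rewrite -[X in _ --> X]add0r -[X in _ --> X + _](scale0r h).
    by apply: cvgD; [apply: cvgZ; [exact: t_cvg | exact: cvg_cst] | exact: cvg_cst].
  near=> t; have t0 : 0 < t by near: t; exact: nbhs_right_gt.
  apply: tikhonov_quotient_ge0 => //; last by rewrite /Q scalerA mulfV ?gt_eqF ?scale1r.
  by near: t; exact: z_cvg.
Unshelve. all: by end_near.
Qed.

End TikhonovStationarity.

Lemma ip_remainder_le (R : realType) (X Y : normedModType R) (ipY : Y -> Y -> R)
    (F : X -> Y) (A : X -> Y) (p d : X) (u : Y) (c : R) :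
  is_inner_product ipY ->
  (forall s, 0 <= s <= 1 -> differentiable F (s *: d + p)) ->
  (forall s, 0 <= s <= 1 -> `|ipY ('d F (s *: d + p) d - A d) u| <= c) ->
  `|ipY (F (d + p) - F p - A d) u| <= c.
Proof.
move=> hY dF hc.
pose g s := ipY (F (s *: d + p)) u.
pose dg s := ipY ('d F (s *: d + p) d) u.
have g_derive (s : R) : 0 <= s <= 1 -> is_derive s 1 g (dg s).
  move=> s01; have g_cvg : h^-1 *: (g (h *: 1 + s) - g s) @[h --> 0^'] --> dg s.
    have -> : (fun h => h^-1 *: (g (h *: 1 + s) - g s)) =
        (fun h => ipY (h^-1 *: (F (h *: d + (s *: d + p)) - F (s *: d + p))) u).
      apply/funext => h; rewrite /g (ipZl hY) (ipBl hY).
      by rewrite [h *: 1]mulr1 scalerDl addrA.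
    by apply: (ip_cvgl hY); exact: diff_dir_cvg (dF s s01).
  by apply: DeriveDef; [exact: cvgP g_cvg | exact: cvg_lim g_cvg].
have g_cont : {within `[0, 1], continuous g}.
  apply: continuous_in_subspaceT => s; rewrite inE /= in_itv /= => s01.
  have /derivable1_diffP dg_s : derivable g s 1 by have [] := g_derive s s01.
  exact: differentiable_continuous.
have [s s01 g_mvt] : exists2 s, s \in `]0, 1[ & g 1 - g 0 = dg s * (1 - 0).
  apply: MVT ltr01 _ g_cont => s; rewrite in_itv /= => /andP[s0 s1].
  by apply: g_derive; rewrite ltW // ltW.
move: s01; rewrite in_itv /= => /andP[s0 s1].
rewrite !(ipBl hY); move: g_mvt; rewrite /g /dg scale1r scale0r add0r subr0 mulr1 => ->.
by rewrite -(ipBl hY) hc // !ltW.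
Qed.

Section Adjoint.
Variables (R : realType) (X Y : normedModType R).
Variables (ipX : X -> X -> R) (ipY : Y -> Y -> R).
Hypotheses (hX : is_inner_product ipX) (hY : is_inner_product ipY).
Variables (A : {linear X -> Y}) (Astar : Y -> X).
Hypothesis hAstar : is_adjoint ipX ipY A Astar.

Lemma adjoint_linear : linear Astar.
Proof.
move=> a u v; apply/subr0_eq; apply: (ip_nondegenerate hX) => w.
by rewrite (ipBr hX) (ipDr hX) (ipZr hX) -!hAstar (ipDr hY) (ipZr hY) subrr.
Qed.

Lemma adjoint_bounded M : 0 <= M -> (forall h, `|A h| <= M * `|h|) ->
  forall v, `|Astar v| <= M * `|v|.
Proof.
move=> M0 A_bounded v.
have [->|Av0] := eqVneq (Astar v) 0; first by rewrite normr0 mulr_ge0.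
have nAv : 0 < `|Astar v| by rewrite normr_gt0.
rewrite -(ler_pM2r nAv) -expr2 -(ip_normr2 hX) -hAstar.
rewrite (le_trans (ler_norm _)) // (le_trans (cauchy_schwarz hY _ _)) //.
by rewrite mulrAC ler_wpM2r.
Qed.

End Adjoint.

(** * Perturbation along approximate eigenvectors *)

Section TikhonovRate.
Variables (R : realType) (X : normedModType R) (Y : completeNormedModType R).
Variables (ipX : X -> X -> R) (ipY : Y -> Y -> R).
Hypotheses (hX : is_inner_product ipX) (hY : is_inner_product ipY).
Variables (F : X -> Y) (xdag xstar : X) (rho kappa M tau : R) (Astar : Y -> X).
Hypotheses (rho0 : 0 < rho) (kappa0 : 0 <= kappa) (M0 : 0 <= M) (tau0 : 0 <= tau).
Hypothesis F_diff : forall x, ball xdag rho x -> differentiable F x.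
Hypothesis F_factor : forall x z, ball xdag rho x -> ball xdag rho z ->
  exists Rxz : {linear X -> X}, continuous Rxz /\
    (forall h, 'd F x h = 'd F z (Rxz h)) /\
    (forall h, `|h - Rxz h| <= kappa * `|x - z| * `|h|).
Local Notation A := ('d F xdag).
Hypothesis A_bounded : forall h, `|A h| <= M * `|h|.
Hypothesis hAstar : is_adjoint ipX ipY A Astar.
HB.instance Definition _ := GRing.isLinear.Build R Y X *:%R Astar (adjoint_linear hX hY hAstar).

Lemma diff_sub_dagger_le x h : ball xdag rho x ->
  `|'d F x h - A h| <= M * kappa * `|x - xdag| * `|h|.
Proof.
move=> x_near; have [Rx [_ [Rx_diff Rx_near]]] := F_factor x_near (ballxx _ rho0).
rewrite Rx_diff -linearB (le_trans (A_bounded _)) // -!mulrA ler_wpM2l //.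
by rewrite distrC mulrA Rx_near.
Qed.

Lemma taylor_remainder_ip d u : `|d| < rho ->
  `|ipY (F (d + xdag) - F xdag - A d) u| <= M * kappa * `|d| ^+ 2 * `|u|.
Proof.
move=> d_rho.
have s_ball (s : R) : 0 <= s <= 1 -> ball xdag rho (s *: d + xdag).
  move=> /andP[s0 s1]; rewrite -ball_normE /= opprD addrCA subrr addr0 normrN.
  by rewrite normrZ ger0_norm // (le_lt_trans _ d_rho) // ler_piMl.
apply: (ip_remainder_le (A := A) hY) => [s /s_ball/F_diff // | s s01].
rewrite (le_trans (cauchy_schwarz hY _ _)) // ler_wpM2r //.
rewrite (le_trans (diff_sub_dagger_le _ (s_ball _ s01))) // addrK normrZ ger0_norm.
  rewrite expr2 !mulrA ler_wpM2r // ler_wpM2r // -[leRHS]mulr1 ler_wpM2l ?mulr_ge0 //.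
  by case/andP: s01.
by case/andP: s01.
Qed.

Lemma adjoint_comp_sym u v : ipY (A (Astar u)) v = ipY u (A (Astar v)).
Proof. by rewrite hAstar (ipC hY u) hAstar (ipC hX). Qed.

Lemma signed_approx_eigenvector l eta (v : X) :
  spectrum (fun y => A (Astar y)) l -> 0 < eta ->
  exists u, `|u| = 1 /\ `|A (Astar u) - l *: u| < eta /\ 0 <= ipX v (Astar u).
Proof.
move=> l_spec eta0.
have T_bounded y : `|(A \o Astar) y| <= M * M * `|y|.
  rewrite -mulrA (le_trans (A_bounded _)) // ler_wpM2l //.
  exact: (adjoint_bounded hX hY hAstar M0 A_bounded).
have [u [u1 u_eig]] := spectrum_approx_eigenvector (T := A \o Astar) hY adjoint_comp_sym
  T_bounded l_spec eta0.
have [u_sign|u_sign] := lerP 0 (ipX v (Astar u)); first by exists u.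
exists (- u); rewrite normrN !linearN /= -opprD normrN (ipNr hX) oppr_ge0.
by split; last split; rewrite ?ltW.
Qed.

Section EigenPerturbation.
Variables (D : set X) (l : R) (u : Y) (x : X) (alpha eps : R).
Local Notation e := (xstar - xdag).
Local Notation d := (x - xdag).
Local Notation w := (Astar u).
Local Notation yd := (F xdag + l *: u).
Hypotheses (l0 : 0 < l) (alpha0 : 0 <= alpha) (eps0 : 0 <= eps) (eps1 : eps <= 1).
Hypotheses (sqrt_l_rho : Num.sqrt l < rho) (sqrt_l_e : 2 * Num.sqrt l <= `|e|)
  (sqrt_l_1 : Num.sqrt l <= 1).
Hypotheses (u_unit : `|u| = 1) (u_approx : `|A w - l *: u| < l / (4 * (tau + 1)))
  (u_sign : 0 <= ipX e w).
Hypotheses (rhoD : ball xdag rho `<=` D) (x_min : tikhonov_minimizer D F xstar alpha yd x).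
Hypotheses (x_residual : `|F x - yd| <= tau * l) (x_close : `|d| <= eps * Num.sqrt l).

Lemma eigen_residual_le : (tau + 1) * `|A w - l *: u| <= l / 4.
Proof.
have := u_approx; rewrite ltr_pdivlMr ?mulr_gt0 ?ltr_wpDl // => h.
by rewrite ler_pdivlMr //; lra.
Qed.

Lemma tikhonov_err_le_sqrt : `|d| <= Num.sqrt l.
Proof. by rewrite (le_trans x_close) // ler_piMl ?sqrtr_ge0. Qed.

Lemma tikhonov_err_lt_rho : `|d| < rho.
Proof. exact: le_lt_trans tikhonov_err_le_sqrt sqrt_l_rho. Qed.

Lemma tikhonov_err_le_half_gap : 2 * `|d| <= `|e|.
Proof. exact: le_trans (ler_wpM2l _ tikhonov_err_le_sqrt) sqrt_l_e. Qed.

Lemma tikhonov_sol_in_ball : ball xdag rho x.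
Proof. by rewrite -ball_normE /= distrC tikhonov_err_lt_rho. Qed.

Lemma tikhonov_sol_stationary h : ipY (F x - yd) ('d F x h) + alpha * ipX (x - xstar) h = 0.
Proof.
apply: (tikhonov_stationary hX hY x_min); last exact: F_diff tikhonov_sol_in_ball.
apply: (filterS rhoD); apply: open_nbhs_nbhs.
by split; [exact: ball_open | exact: tikhonov_sol_in_ball].
Qed.

Lemma adjoint_eigvec_le : `|w| <= 2 * Num.sqrt l.
Proof.
have := eigen_residual_le; rewrite mulrDl mul1r => defect.
have w2 : `|w| ^+ 2 <= l + `|A w - l *: u|.
  rewrite -(ip_normr2 hX) -hAstar.
  have -> : ipY (A w) u = l + ipY (A w - l *: u) u.
    by rewrite (ipBl hY) (ipZl hY) (ip_normr2 hY) u_unit expr1n mulr1 addrC subrK.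
  rewrite lerD2l (le_trans (ler_norm _)) // (le_trans (cauchy_schwarz hY _ _)) //.
  by rewrite u_unit mulr1.
rewrite -(@ler_pXn2r _ 2) ?nnegrE ?mulr_ge0 ?sqrtr_ge0 //.
rewrite exprMn sqr_sqrtr ?(ltW l0) // [X in _ <= X * _]expr2.
have : 0 <= tau * `|A w - l *: u| by rewrite mulr_ge0.
have := l0; lra.
Qed.

Lemma diff_tikhonov_sol_bounded h : `|'d F x h| <= M * (1 + kappa) * `|h|.
Proof.
have d1 : `|d| <= 1 := le_trans tikhonov_err_le_sqrt sqrt_l_1.
have -> : 'd F x h = ('d F x h - A h) + A h by rewrite subrK.
rewrite (le_trans (ler_normD _ _)) // mulrDr mulr1 mulrDl addrC lerD ?A_bounded //.
rewrite (le_trans (diff_sub_dagger_le h tikhonov_sol_in_ball)) // ler_wpM2r //.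
by rewrite -[leRHS]mulr1 ler_wpM2l ?mulr_ge0.
Qed.

Lemma tikhonov_param_le : alpha <= 2 * tau * M * (1 + kappa) / `|e| * l.
Proof.
set g := xstar - x.
have e0 : 0 < `|e| by apply: lt_le_trans sqrt_l_e; rewrite mulr_gt0 ?sqrtr_gt0.
have e_g : `|e| <= 2 * `|g|.
  have : `|e| <= `|g| + `|d| by rewrite (le_trans _ (ler_normD _ _)) // /g subrKA.
  by have := tikhonov_err_le_half_gap; lra.
have g0 : 0 < `|g| by lra.
have balance : alpha * `|g| ^+ 2 = ipY (F x - yd) ('d F x g).
  have := tikhonov_sol_stationary g; have -> : x - xstar = - g by rewrite /g opprB.
  rewrite (ipNl hX) (ip_normr2 hX) mulrN => /eqP; rewrite subr_eq0 => /eqP ->.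
  by [].
have alpha_g : alpha * `|g| <= tau * l * (M * (1 + kappa)).
  rewrite -(ler_pM2r g0) -[leLHS]mulrA -expr2 balance -[leRHS]mulrA.
  rewrite (le_trans (ler_norm _)) // (le_trans (cauchy_schwarz hY _ _)) //.
  by apply: ler_pM; rewrite ?normr_ge0 ?x_residual ?diff_tikhonov_sol_bounded.
rewrite mulrAC ler_pdivlMr //.
have : alpha * `|e| <= alpha * (2 * `|g|) by rewrite ler_wpM2l.
have := alpha_g; lra.
Qed.

Lemma tikhonov_balance_ge :
  3 / 4 * l ^+ 2 - l * (M * kappa * `|d| ^+ 2) - tau * l * (M * kappa * `|d| * `|w|)
    <= (l + alpha) * ipX d w.
Proof.
set r := F x - yd.
have r_u : ipY r u = ipY (F (d + xdag) - F xdag - A d) u + ipX d w - l.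
  rewrite subrK -hAstar -(ipDl hY) subrK /r opprD addrA (ipBl hY) (ipZl hY).
  by rewrite (ip_normr2 hY) u_unit expr1n mulr1.
(* Stationarity tested with w = A^* u; the three pieces of F'(x) w are the
   eigenvalue term, the eigen-residual and the linearization error. *)
have Fx_w : 'd F x w = l *: u + (A w - l *: u) + ('d F x w - A w).
  by rewrite [l *: u + _]addrC subrK addrC subrK.
have stat := tikhonov_sol_stationary w.
rewrite -/r Fx_w (_ : x - xstar = d - e) in stat; last by rewrite opprB subrKA.
rewrite (ipBl hX) 2!(ipDr hY) (ipZr hY) r_u in stat.
have E1_le : l * ipY (F (d + xdag) - F xdag - A d) u <= l * (M * kappa * `|d| ^+ 2).
  rewrite ler_wpM2l ?(ltW l0) // (le_trans (ler_norm _)) //.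
  by rewrite (le_trans (taylor_remainder_ip _ tikhonov_err_lt_rho)) // u_unit mulr1.
have r_le : `|r| <= tau * l := x_residual.
have E2_le : ipY r ('d F x w - A w) <= tau * l * (M * kappa * `|d| * `|w|).
  rewrite (le_trans (ler_norm _)) // (le_trans (cauchy_schwarz hY _ _)) //.
  by apply: ler_pM; rewrite ?normr_ge0 // (diff_sub_dagger_le _ tikhonov_sol_in_ball).
have E3_le : ipY r (A w - l *: u) <= l * (l / 4).
  rewrite (le_trans (ler_norm _)) // (le_trans (cauchy_schwarz hY _ _)) //.
  rewrite (le_trans (ler_wpM2r (normr_ge0 _) r_le)) // mulrAC mulrC ler_wpM2l ?(ltW l0) //.
  by rewrite (le_trans _ eigen_residual_le) // ler_wpM2r // lerDl.
have I_ge0 : 0 <= alpha * ipX e w by rewrite mulr_ge0.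
have := l0; lra.
Qed.

Lemma tikhonov_rate_const_ge :
  3 / 4 <= eps * (2 * (1 + 2 * tau * M * (1 + kappa) / `|e|) + M * kappa * (1 + 2 * tau)).
Proof.
set C := 2 * tau * M * (1 + kappa) / `|e|.
have C0 : 0 <= C by rewrite !mulr_ge0 ?invr_ge0 ?addr_ge0.
have Mk0 : 0 <= M * kappa by rewrite mulr_ge0.
have sl2 : Num.sqrt l ^+ 2 = l by rewrite sqr_sqrtr ?ltW.
have dw : `|d| * `|w| <= 2 * eps * l.
  apply: (le_trans (ler_pM _ _ x_close adjoint_eigvec_le)) => //.
  by rewrite mulrCA -[eps * _ * _]mulrA -expr2 sl2 mulrA.
have d2 : `|d| ^+ 2 <= eps * l.
  apply: (le_trans (y := (eps * Num.sqrt l) ^+ 2)).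
    by rewrite ler_pXn2r ?nnegrE ?mulr_ge0 ?sqrtr_ge0.
  by rewrite exprMn sl2 ler_wpM2r ?(ltW l0) // expr2 ler_piMl.
have upper : (l + alpha) * ipX d w <= (l + C * l) * (2 * eps * l).
  apply: (le_trans (ler_wpM2l _ (le_trans (ler_norm _) (cauchy_schwarz hX _ _)))).
    by rewrite addr_ge0 ?(ltW l0).
  by apply: ler_pM; rewrite ?addr_ge0 ?mulr_ge0 ?(ltW l0) // lerD2l tikhonov_param_le.
have := tikhonov_balance_ge.
have h1 : l * (M * kappa * `|d| ^+ 2) <= l * (M * kappa * (eps * l)).
  by rewrite ler_wpM2l ?(ltW l0) // ler_wpM2l.
have h2 : tau * l * (M * kappa * `|d| * `|w|) <= tau * l * (M * kappa * (2 * eps * l)).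
  by rewrite ler_wpM2l ?mulr_ge0 ?(ltW l0) // -mulrA ler_wpM2l.
(* lra fails when the context mentions [Num.sqrt] or an inverse of a variable. *)
rewrite -(ler_pM2r (exprn_gt0 2 l0)); clear sl2; clearbody C.
lra.
Qed.

End EigenPerturbation.

Lemma tikhonov_fast_rate_absurd (D : set X) : ball xdag rho `<=` D -> xstar != xdag ->
  exists2 eps, 0 < eps & exists2 l0, 0 < l0 &
  forall l u x alpha, 0 < l < l0 -> `|u| = 1 ->
    `|A (Astar u) - l *: u| < l / (4 * (tau + 1)) -> 0 <= ipX (xstar - xdag) (Astar u) ->
    0 <= alpha -> tikhonov_minimizer D F xstar alpha (F xdag + l *: u) x ->
    `|F x - (F xdag + l *: u)| <= tau * l -> `|x - xdag| <= eps * Num.sqrt l -> False.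
Proof.
move=> rhoD xstar_neq.
have e0 : 0 < `|xstar - xdag| by rewrite normr_gt0 subr_eq0.
set K := 2 * (1 + 2 * tau * M * (1 + kappa) / `|xstar - xdag|) + M * kappa * (1 + 2 * tau).
have K2 : 2 <= K.
  have : 0 <= 2 * tau * M * (1 + kappa) / `|xstar - xdag| by rewrite !mulr_ge0 ?invr_ge0 ?addr_ge0.
  have : 0 <= M * kappa * (1 + 2 * tau) by rewrite !mulr_ge0 ?addr_ge0 ?mulr_ge0.
  rewrite /K; lra.
have [eps0 eps1 epsK] : [/\ 0 < (2 * K)^-1, (2 * K)^-1 <= 1 & (2 * K)^-1 * K < 3 / 4].
  move: K2; clearbody K => K2; have K0 : 0 < K by apply: lt_le_trans K2.
  rewrite invr_gt0 mulr_gt0 // invf_le1 ?mulr_gt0 // invfM -mulrA mulVf ?gt_eqF // mulr1.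
  by split => //; lra.
pose s0 := Num.min (Num.min rho (`|xstar - xdag| / 2)) 1.
have s00 : 0 < s0 by rewrite !lt_min rho0 divr_gt0 ?ltr01.
exists (2 * K)^-1 => //; exists (s0 ^+ 2); first exact: exprn_gt0.
move=> l u x alpha /andP[l0 l_lt] u_unit u_approx u_sign alpha0 x_min x_res x_close.
have : Num.sqrt l < s0 by rewrite -(gtr0_norm s00) -sqrtr_sqr ltr_sqrt ?exprn_gt0.
rewrite !lt_min => /andP[/andP[sqrt_l_rho sqrt_l_e] /ltW sqrt_l_1].
have sqrt_l_e2 : 2 * Num.sqrt l <= `|xstar - xdag| by rewrite mulrC -ler_pdivlMr // ltW.
have := tikhonov_rate_const_ge l0 alpha0 (ltW eps0) eps1 sqrt_l_rho sqrt_l_e2 sqrt_l_1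
  u_unit u_approx u_sign rhoD x_min x_res x_close.
by move/(lt_le_trans epsK); rewrite ltxx.
Qed.

End TikhonovRate.

Lemma diff_bounded (R : realType) (X Y : normedModType R) (F : X -> Y) (x : X) :
  differentiable F x -> exists2 M, 0 < M & forall h, `|'d F x h| <= M * `|h|.
Proof.
move=> dF; have /linear_boundedP/pinfty_ex_gt0 [M M0 HM] : bounded_near ('d F x) (nbhs 0).
  by apply/linear_bounded_continuous; exact: diff_continuous.
by exists M.
Qed.

Theorem theorem2p2 (R : realType)
  (X Y : completeNormedModType R) (ipX : X -> X -> R) (ipY : Y -> Y -> R)
  (hX : is_inner_product ipX) (hY : is_inner_product ipY)
  (D : set X) (F : X -> Y) (y : Y) (xstar xdag : X)
  (hy : exists x, D x /\ F x = y) (hxstar : D xstar)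
  (hdag : min_norm_solution D F y xstar xdag)
  (hA1 : assumption1 D F xdag)
  (Astar : Y -> X) (hAstar : is_adjoint ipX ipY ('d F xdag) Astar)
  (lam : nat -> R)
  (hlam_pos : forall k, 0 < lam k)
  (hlam_spec : forall k, spectrum (fun v => 'd F xdag (Astar v)) (lam k))
  (hlam_cvg : lam @ \oo --> 0)
  (tau : R) (htau : 0 < tau)
  (alpha : R -> Y -> R) (xsel : R -> Y -> X)
  (hsel : exists delta0 : R, 0 < delta0 /\
     forall (delta : R) (ydelta : Y), 0 < delta < delta0 ->
       `|ydelta - y| <= delta ->
       0 < alpha delta ydelta /\
       tikhonov_minimizer D F xstar (alpha delta ydelta) ydelta (xsel delta ydelta) /\
       `|F (xsel delta ydelta) - ydelta| <= tau * delta)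
  (ho : forall eps : R, 0 < eps -> exists delta1 : R, 0 < delta1 /\
     forall (delta : R) (ydelta : Y), 0 < delta < delta1 ->
       `|ydelta - y| <= delta ->
       `|xsel delta ydelta - xdag| <= eps * Num.sqrt delta) :
  xdag = xstar.
Proof.
have [_ [Fdag _]] := hdag; subst y.
case: hA1 => rho [rho0 [rhoD [F_diff [kappa [kappa0 F_factor]]]]].
case: hsel => delta0 [delta00 hsel].
have [//|xstar_neq] := eqVneq xstar xdag; exfalso.
have [M M0 A_bounded] := diff_bounded (F_diff _ (ballxx xdag rho0)).
have [eps eps0 [l0 l00 no_fast_rate]] := tikhonov_fast_rate_absurd hX hY rho0 kappa0
  (ltW M0) (ltW htau) F_diff F_factor A_bounded hAstar rhoD xstar_neq.
have [delta1 [delta10 x_rate]] := ho eps eps0.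
near \oo => k.
have : lam k < Num.min (Num.min delta0 delta1) l0.
  by near: k; apply: (cvgr_lt 0 hlam_cvg); rewrite !lt_min delta00 delta10 l00.
rewrite !lt_min => /andP[/andP[l_delta0 l_delta1] l_l0].
have l_pos := hlam_pos k.
have eta0 : 0 < lam k / (4 * (tau + 1)) by rewrite divr_gt0 ?mulr_gt0 ?addr_gt0.
have [u [u_unit [u_approx u_sign]]] :=
  signed_approx_eigenvector hX hY (ltW M0) A_bounded hAstar (xstar - xdag) (hlam_spec k) eta0.
pose yd := F xdag + lam k *: u.
have yd_close : `|yd - F xdag| <= lam k by rewrite /yd addrC addKr normrZ u_unit mulr1 gtr0_norm.
have l_delta0' : 0 < lam k < delta0 by rewrite l_pos.
have [alpha0 [x_min x_res]] := hsel _ yd l_delta0' yd_close.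
apply: (no_fast_rate (lam k) u (xsel (lam k) yd) (alpha (lam k) yd)) => //.
- by rewrite l_pos l_l0.
- exact: ltW.
- by apply: x_rate; rewrite ?l_pos.
Unshelve. all: by end_near.
Qed.
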